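(* Let $L$ be a weak Noetherian C-lattice. Then $L$ is sharp if and only if every element of $L$ is principal.
   Context: A multiplicative lattice is a complete lattice $(L,\le)$ with bottom $0$ and top $1$ which is also a commutative monoid with identity $1$ such that $a(\bigvee_\alpha b_\alpha)=\bigvee_\alpha(ab_\alpha)$ for all $a,b_\alpha\in L$. For $x,y\in L$, $(y:x)=\bigvee\{a\in L: ax\le y\}$. An element $c$ is compact if $c\le\bigvee S$ implies $c\le\bigvee T$ for some finite $T\subseteq S$. A C-lattice is a multiplicative lattice in which $1$ is compact, the product of two compact elements is compact, and every element is a join of compact elements. An element $x$ is meet principal if $y\wedge zx=((y:x)\wedge z)x$ for all $y,z\in L$; join principal if $y\vee(z:x)=((yx\vee z):x)$ for all $y,z\in L$; principal if both. $L$ is weak Noetherian if every element is a join of principal elements and every element of $L$ is compact. $L$ is sharp if whenever $a_1a_2\le b$ with $a_1,a_2,b\in L$, there exist $b_1,b_2\in L$ with $a_i\le b_i$ ($i=1,2$) and $b=b_1b_2$. *)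

From Stdlib Require Import List.

Record MultLattice := {
  carrier :> Type;
  le : carrier -> carrier -> Prop;
  sup : (carrier -> Prop) -> carrier;
  mul : carrier -> carrier -> carrier;
  one : carrier;
  le_refl : forall x, le x x;
  le_antisym : forall x y, le x y -> le y x -> x = y;
  le_trans : forall x y z, le x y -> le y z -> le x z;
  sup_ub : forall (S : carrier -> Prop) x, S x -> le x (sup S);
  sup_least : forall (S : carrier -> Prop) y,
      (forall x, S x -> le x y) -> le (sup S) y;
  one_top : forall x, le x one;
  mulA : forall x y z, mul x (mul y z) = mul (mul x y) z;
  mulC : forall x y, mul x y = mul y x;
  mul1 : forall x, mul one x = x;
  mul_sup : forall a (S : carrier -> Prop),
      mul a (sup S) = sup (fun z => exists b, S b /\ z = mul a b)
}.

Section Defs.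
Variable L : MultLattice.

Definition zero : L := sup L (fun _ => False).
Definition join (x y : L) : L := sup L (fun z => z = x \/ z = y).
Definition meet (x y : L) : L := sup L (fun z => le L z x /\ le L z y).

Definition res (y x : L) : L := sup L (fun a => le L (mul L a x) y).

Definition compact (c : L) : Prop :=
  forall S : L -> Prop, le L c (sup L S) ->
    exists l : list L, (forall x, In x l -> S x) /\
                       le L c (sup L (fun x => In x l)).

Definition C_lattice : Prop :=
  compact (one L) /\
  (forall a b, compact a -> compact b -> compact (mul L a b)) /\
  (forall x : L, exists S : L -> Prop,
      (forall c, S c -> compact c) /\ x = sup L S).

Definition meet_principal (x : L) : Prop :=
  forall y z, meet y (mul L z x) = mul L (meet (res y x) z) x.

Definition join_principal (x : L) : Prop :=
  forall y z, join y (res z x) = res (join (mul L y x) z) x.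

Definition principal (x : L) : Prop := meet_principal x /\ join_principal x.

Definition weak_noetherian : Prop :=
  (forall x : L, exists S : L -> Prop,
      (forall p, S p -> principal p) /\ x = sup L S) /\
  (forall x : L, compact x).

Definition sharp : Prop :=
  forall a1 a2 b : L, le L (mul L a1 a2) b ->
    exists b1 b2 : L, le L a1 b1 /\ le L a2 b2 /\ b = mul L b1 b2.

End Defs.

(* If every element is meet principal, a1 a2 <= b factors as
   b = (a1 v b) (b : (a1 v b)), so L is sharp.

   Conversely, principality can be tested locally: write a <=_m b when
   c a <= b for some c not below the maximal element m.  Since every element
   is compact, maximal elements exist above every proper element and
   Noetherian induction is available.  Sharpness squeezes every element
   between m^2 and m to m or m^2, so by Nakayama m is locally principal.
   A Noetherian induction then makes every x locally principal at m: either
   (x : m) = x and Nakayama gives x <=_m 0, or sharpness gives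
   x = m (x : m) with (x : m) strictly above x. *)

From Stdlib Require Import List Classical ClassicalEpsilon Lia.

Set Implicit Arguments.
Unset Strict Implicit.

Section MultLattice.
Context {L : MultLattice}.

Local Infix "≤" := (le L) (at level 70, no associativity).
Local Infix "·" := (mul L) (at level 40, left associativity).
Local Infix "⊓" := (meet L) (at level 45, left associativity).
Local Infix "⊔" := (join L) (at level 50, left associativity).
Local Infix "÷" := (res L) (at level 35, no associativity).
Local Notation "⊤" := (one L).
Local Notation "⊥" := (zero L).

Lemma le_join_l x y : x ≤ x ⊔ y.
Proof. apply sup_ub; auto. Qed.

Lemma le_join_r x y : y ≤ x ⊔ y.
Proof. apply sup_ub; auto. Qed.

Lemma le_join_of_le_l x y z : x ≤ y -> x ≤ y ⊔ z.
Proof. intros H. apply le_trans with y; [exact H | apply le_join_l]. Qed.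

Lemma le_join_of_le_r x y z : x ≤ z -> x ≤ y ⊔ z.
Proof. intros H. apply le_trans with z; [exact H | apply le_join_r]. Qed.

Lemma join_le x y z : x ≤ z -> y ≤ z -> x ⊔ y ≤ z.
Proof. intros. apply sup_least; intros w [-> | ->]; auto. Qed.

Lemma join_of_le x y : x ≤ y -> x ⊔ y = y.
Proof.
  intros H. apply le_antisym; [apply join_le; auto using le_refl | apply le_join_r].
Qed.

Lemma joinC x y : x ⊔ y = y ⊔ x.
Proof. apply le_antisym; apply join_le; auto using le_join_l, le_join_r. Qed.

Lemma le_meet_l x y : x ⊓ y ≤ x.
Proof. apply sup_least; intros z [H _]; exact H. Qed.

Lemma le_meet_r x y : x ⊓ y ≤ y.
Proof. apply sup_least; intros z [_ H]; exact H. Qed.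

Lemma meet_ge x y z : z ≤ x -> z ≤ y -> z ≤ x ⊓ y.
Proof. intros. apply sup_ub; auto. Qed.

Lemma bot_le x : ⊥ ≤ x.
Proof. apply sup_least; intros _ []. Qed.

Lemma mul_joinr c a b : c · (a ⊔ b) = c · a ⊔ c · b.
Proof.
  apply le_antisym.
  - unfold join at 1. rewrite mul_sup. apply sup_least.
    intros z [d [[-> | ->] ->]]; [apply le_join_l | apply le_join_r].
  - apply join_le; unfold join; rewrite mul_sup; apply sup_ub; eauto.
Qed.

Lemma mul_mono_r c a b : a ≤ b -> c · a ≤ c · b.
Proof. intros H. rewrite <- (join_of_le H), mul_joinr. apply le_join_l. Qed.

Lemma mul_mono_l c a b : a ≤ b -> a · c ≤ b · c.
Proof. intros. rewrite !(mulC L _ c). apply mul_mono_r; auto. Qed.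

Lemma mul_mono a b c d : a ≤ b -> c ≤ d -> a · c ≤ b · d.
Proof.
  intros. apply le_trans with (b · c); [apply mul_mono_l | apply mul_mono_r]; auto.
Qed.

Lemma mulr1 x : x · ⊤ = x.
Proof. rewrite mulC; apply mul1. Qed.

Lemma mul_le_l a b : a · b ≤ a.
Proof. rewrite <- (mulr1 a) at 2. apply mul_mono_r, one_top. Qed.

Lemma mul_le_r a b : a · b ≤ b.
Proof. rewrite mulC; apply mul_le_l. Qed.

Lemma mulr0 a : a · ⊥ = ⊥.
Proof.
  apply le_antisym; [| apply bot_le].
  unfold zero at 1. rewrite mul_sup. apply sup_least; intros z [b [[] _]].
Qed.

Lemma mulCA a b c : a · (b · c) = b · (a · c).
Proof. rewrite !mulA, (mulC L a b). reflexivity. Qed.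

Lemma res_mul_le y x : (y ÷ x) · x ≤ y.
Proof.
  rewrite mulC. unfold res. rewrite mul_sup. apply sup_least.
  intros z [b [Hb ->]]. rewrite mulC; exact Hb.
Qed.

Lemma le_res a y x : a · x ≤ y -> a ≤ y ÷ x.
Proof. intros. apply sup_ub; auto. Qed.

Lemma res_top x y : x ≤ y -> y ÷ x = ⊤.
Proof.
  intros. apply le_antisym; [apply one_top |]. apply le_res; rewrite mul1; auto.
Qed.

Lemma res_res z a b : (z ÷ a) ÷ b = z ÷ (a · b).
Proof.
  apply le_antisym; apply le_res.
  - rewrite (mulC L a b), mulA.
    apply le_trans with ((z ÷ a) · a); [apply mul_mono_l, res_mul_le | apply res_mul_le].
  - apply le_res. rewrite <- mulA, (mulC L b a). apply res_mul_le.
Qed.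

(** * Principal elements *)

Lemma meet_principal_ge x y z : ((y ÷ x) ⊓ z) · x ≤ y ⊓ z · x.
Proof.
  apply meet_ge.
  - apply le_trans with ((y ÷ x) · x); [apply mul_mono_l, le_meet_l | apply res_mul_le].
  - apply mul_mono_l, le_meet_r.
Qed.

Lemma join_principal_le x y z : y ⊔ (z ÷ x) ≤ (y · x ⊔ z) ÷ x.
Proof.
  apply join_le; apply le_res; [apply le_join_l |].
  apply le_join_of_le_r, res_mul_le.
Qed.

Lemma meet_principal_res x y : meet_principal L x -> y ⊓ x = (y ÷ x) · x.
Proof.
  intros Hx. pose proof (Hx y ⊤) as E. rewrite mul1 in E. rewrite E.
  f_equal. apply le_antisym; [apply le_meet_l | apply meet_ge; auto using le_refl, one_top].
Qed.

Lemma bot_principal : principal L ⊥.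
Proof.
  split; intros y z.
  - rewrite !mulr0. apply le_antisym; [apply le_meet_r | apply bot_le].
  - rewrite !res_top by apply bot_le. apply le_antisym; [apply one_top | apply le_join_r].
Qed.

Lemma mul_principal a b : principal L a -> principal L b -> principal L (a · b).
Proof.
  intros [Ham Haj] [Hbm Hbj]. split; intros y z.
  - rewrite mulA, Hbm, Ham, res_res, (mulC L b a), mulA. reflexivity.
  - rewrite <- res_res, Hbj, Haj, res_res, <- mulA, (mulC L a b). reflexivity.
Qed.

Lemma sharp_of_meet_principal : (forall x : L, meet_principal L x) -> sharp L.
Proof.
  intros Hall a1 a2 b Hab. exists (a1 ⊔ b), (b ÷ (a1 ⊔ b)).
  split; [apply le_join_l | split].
  - apply le_res. rewrite mul_joinr. apply join_le; [rewrite mulC; exact Hab | apply mul_le_r].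
  - rewrite mulC, <- meet_principal_res by apply Hall.
    apply le_antisym; [apply meet_ge; [apply le_refl | apply le_join_r] | apply le_meet_l].
Qed.

(** * Maximal elements and localization *)

Definition maximal (m : L) : Prop :=
  m <> ⊤ /\ forall t, m ≤ t -> t <> ⊤ -> t = m.

Lemma maximal_ge_cases m b : maximal m -> m ≤ b -> b = ⊤ \/ b = m.
Proof.
  intros [_ Hm] Hb. destruct (classic (b = ⊤)); auto.
Qed.

Lemma maximal_top_nle m : maximal m -> ~ ⊤ ≤ m.
Proof. intros [Hm _] H. apply Hm, le_antisym; auto using one_top. Qed.

Lemma maximal_prime m a b : maximal m -> ~ a ≤ m -> ~ b ≤ m -> ~ a · b ≤ m.
Proof.
  intros Hm Ha Hb Hab.
  destruct (maximal_ge_cases Hm (le_join_l m a)) as [E | E].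
  - apply Hb. rewrite <- (mulr1 b), <- E, mul_joinr.
    apply join_le; [apply mul_le_r | rewrite mulC; exact Hab].
  - apply Ha. rewrite <- E. apply le_join_r.
Qed.

(* [le_at m a b] says that a <= b holds in the localization at m. *)
Definition le_at (m a b : L) : Prop := exists2 c, ~ c ≤ m & c · a ≤ b.

Definition locally_principal_at (m x : L) : Prop :=
  exists p, principal L p /\ p ≤ x /\ le_at m x p.

Lemma le_at_of_le m a b : maximal m -> a ≤ b -> le_at m a b.
Proof. intros Hm H. exists ⊤; [apply maximal_top_nle; auto | rewrite mul1; auto]. Qed.

Lemma le_at_refl m a : maximal m -> le_at m a a.
Proof. intros Hm. apply le_at_of_le; [exact Hm | apply le_refl]. Qed.

Lemma le_le_at_trans m a b c : a ≤ b -> le_at m b c -> le_at m a c.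
Proof.
  intros H [d Hd Hdb]. exists d; [auto | apply le_trans with (d · b); auto using mul_mono_r].
Qed.

Lemma le_at_le_trans m a b c : le_at m a b -> b ≤ c -> le_at m a c.
Proof. intros [d Hd Hda] H. exists d; [auto | apply le_trans with b; auto]. Qed.

Lemma le_at_trans m a b c : maximal m -> le_at m a b -> le_at m b c -> le_at m a c.
Proof.
  intros Hm [d Hd Hda] [e He Heb]. exists (e · d); [apply maximal_prime; auto |].
  rewrite <- mulA. apply le_trans with (e · b); auto using mul_mono_r.
Qed.

Lemma le_at_join m a b c : maximal m -> le_at m a c -> le_at m b c -> le_at m (a ⊔ b) c.
Proof.
  intros Hm [d Hd Hda] [e He Heb]. exists (d · e); [apply maximal_prime; auto |].
  rewrite mul_joinr. apply join_le.
  - rewrite (mulC L d e), <- mulA. apply le_trans with (d · a); auto using mul_le_r.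
  - rewrite <- mulA. apply le_trans with (e · b); auto using mul_le_r.
Qed.

Lemma le_at_mul m a b c d : maximal m ->
  le_at m a b -> le_at m c d -> le_at m (a · c) (b · d).
Proof.
  intros Hm [e He Hea] [f Hf Hfc]. exists (e · f); [apply maximal_prime; auto |].
  rewrite <- mulA, (mulCA f a c), (mulA L e a). apply mul_mono; auto.
Qed.

Lemma le_at_nle_res m a b : le_at m a b -> ~ b ÷ a ≤ m.
Proof. intros [c Hc Hca] H. apply Hc. apply le_trans with (b ÷ a); auto using le_res. Qed.

(* Join principality gives (c ⊔ m · p) ÷ p = m ⊔ (c ÷ p), hence c ÷ p is not below m. *)
Lemma le_at_principal_nakayama m p c :
  principal L p -> le_at m p (c ⊔ m · p) -> le_at m p c.
Proof.
  intros [_ Hp] H. exists (c ÷ p); [| apply res_mul_le].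
  intros Hc. apply (le_at_nle_res H).
  rewrite joinC, <- Hp. apply join_le; auto using le_refl.
Qed.

Definition lsup (l : list L) : L := sup L (fun x => In x l).

Lemma le_lsup l p : In p l -> p ≤ lsup l.
Proof. exact (sup_ub L _ p). Qed.

Lemma lsup_le l y : (forall p, In p l -> p ≤ y) -> lsup l ≤ y.
Proof. exact (sup_least L _ y). Qed.

Lemma lsup_cons p l : lsup (p :: l) = p ⊔ lsup l.
Proof.
  apply le_antisym.
  - apply lsup_le; intros x [<- | Hx]; [apply le_join_l |].
    apply le_join_of_le_r, le_lsup; auto.
  - apply join_le; [apply le_lsup; left; auto |].
    apply lsup_le; intros x Hx; apply le_lsup; right; auto.
Qed.

Lemma le_at_lsup_nakayama m l c : maximal m -> (forall p, In p l -> principal L p) ->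
  le_at m (lsup l) (c ⊔ m · lsup l) -> le_at m (lsup l) c.
Proof.
  intros Hm. revert c. induction l as [| p l IH]; intros c Hl H.
  { apply le_at_of_le; auto. apply lsup_le; intros p []. }
  rewrite lsup_cons, mul_joinr in *. set (A := lsup l) in *.
  assert (Hp : principal L p) by (apply Hl; left; auto).
  assert (HpA : le_at m p (c ⊔ A)).
  { apply le_at_principal_nakayama; auto.
    apply (le_le_at_trans (le_join_l p A)), (le_at_le_trans H).
    apply join_le; [apply le_join_of_le_l, le_join_l |].
    apply join_le; [apply le_join_r |].
    apply le_join_of_le_l, le_join_of_le_r, mul_le_r. }
  assert (HA : le_at m A (c ⊔ m · p)).
  { apply IH; [intros q Hq; apply Hl; right; auto |].
    apply (le_le_at_trans (le_join_r p A)), (le_at_le_trans H).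
    apply join_le; [apply le_join_of_le_l, le_join_l |].
    apply join_le; [apply le_join_of_le_l, le_join_r | apply le_join_r]. }
  assert (Hpc : le_at m p c).
  { apply le_at_principal_nakayama; auto. apply (le_at_trans Hm HpA).
    apply le_at_join; auto. apply le_at_of_le; [auto | apply le_join_l]. }
  assert (Hmpc : le_at m (m · p) c).
  { apply le_at_le_trans with (m · c); [| apply mul_le_r].
    apply le_at_mul; auto using le_at_refl. }
  apply le_at_join; auto.
  apply (le_at_trans Hm HA). apply le_at_join; auto using le_at_refl.
Qed.

Lemma sharp_maximal_sq_cases m b : sharp L -> maximal m ->
  m · m ≤ b -> b ≤ m -> b = m \/ b = m · m.
Proof.
  intros Hsh Hm Hb Hbm. destruct (Hsh m m b Hb) as [b1 [b2 [H1 [H2 E]]]].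
  destruct (maximal_ge_cases Hm H1) as [-> | ->];
    destruct (maximal_ge_cases Hm H2) as [-> | ->]; rewrite E.
  - rewrite mul1 in E. subst b. destruct (maximal_top_nle Hm Hbm).
  - left; apply mul1.
  - left; apply mulr1.
  - right; reflexivity.
Qed.

Lemma sharp_maximal_mul_res m x : sharp L -> maximal m ->
  ~ x ÷ m ≤ x -> x = m · (x ÷ m).
Proof.
  intros Hsh Hm Hx.
  destruct (Hsh m (x ÷ m) x) as [b1 [b2 [H1 [H2 E]]]]; [rewrite mulC; apply res_mul_le |].
  destruct (maximal_ge_cases Hm H1) as [-> | ->].
  - rewrite mul1 in E. subst b2. contradiction.
  - apply le_antisym; [| rewrite mulC; apply res_mul_le].
    rewrite E at 1. apply mul_mono_r, le_res. rewrite mulC, <- E. apply le_refl.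
Qed.

(** * Consequences of compactness *)

Section Compact.
Hypothesis L_compact : forall x : L, compact L x.

Lemma chain_stationary (f : nat -> L) :
  (forall n, f n ≤ f (S n)) -> exists N, f (S N) ≤ f N.
Proof.
  intros Hf.
  assert (Hmono : forall i j, (i <= j)%nat -> f i ≤ f j).
  { intros i j Hij. induction Hij; [apply le_refl | eapply le_trans; eauto]. }
  set (T := fun z => exists n, z = f n).
  destruct (L_compact (le_refl L (sup L T))) as [l [Hl Hle]].
  assert (HN : exists N, forall z, In z l -> z ≤ f N).
  { clear Hle. induction l as [| a l IH].
    - exists O; intros z [].
    - destruct IH as [N HN]; [intros z Hz; apply Hl; right; auto |].
      destruct (Hl a (or_introl eq_refl)) as [k ->].
      exists (Nat.max N k). intros z [<- | Hz]; [apply Hmono; lia |].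
      apply le_trans with (f N); [auto | apply Hmono; lia]. }
  destruct HN as [N HN]. exists N.
  apply le_trans with (sup L T); [apply sup_ub; exists (S N); auto |].
  apply le_trans with (lsup l); [exact Hle | apply lsup_le; exact HN].
Qed.

Lemma noetherian_ind (P : L -> Prop) :
  (forall x, (forall y, x ≤ y -> y <> x -> P y) -> P x) -> forall x, P x.
Proof.
  intros Hind x0. apply NNPP; intros Hx0.
  assert (Hstep : forall x, exists y, ~ P x -> ~ P y /\ x ≤ y /\ y <> x).
  { intros x. destruct (classic (P x)) as [Hx | Hx]; [exists x; tauto |].
    apply NNPP; intros Hn. apply Hx, Hind. intros y Hxy Hyx.
    apply NNPP; intros Hy. apply Hn. exists y; auto. }
  set (next x := proj1_sig (constructive_indefinite_description _ (Hstep x))).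
  assert (Hnext : forall x, ~ P x -> ~ P (next x) /\ x ≤ next x /\ next x <> x)
    by (intros x; exact (proj2_sig (constructive_indefinite_description _ (Hstep x)))).
  set (f n := Nat.iter n next x0).
  assert (Hf : forall n, ~ P (f n)) by (induction n; simpl; [| apply Hnext]; auto).
  destruct (chain_stationary (f := f)) as [N HN]; [intros n; apply (Hnext _ (Hf n)) |].
  apply (Hnext _ (Hf N)). apply le_antisym; [exact HN | apply (Hnext _ (Hf N))].
Qed.

Lemma exists_maximal_above s : s <> ⊤ -> exists m, maximal m /\ s ≤ m.
Proof.
  induction s as [s IH] using noetherian_ind. intros Hs.
  destruct (classic (maximal s)) as [Hm | Hm]; [exists s; split; [exact Hm | apply le_refl] |].
  assert (exists t, s ≤ t /\ t <> ⊤ /\ t <> s) as [t [Hst [Ht Hts]]].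
  { apply NNPP; intros Hn. apply Hm. split; auto.
    intros t H1 H2. apply NNPP; intros Hts. apply Hn; eauto. }
  destruct (IH t Hst Hts Ht) as [m [Hm' Htm]]. exists m; eauto using le_trans.
Qed.

Lemma le_of_le_at a b : (forall m, maximal m -> le_at m a b) -> a ≤ b.
Proof.
  intros H. destruct (classic (b ÷ a = ⊤)) as [E | E].
  - rewrite <- (mul1 L a), <- E. apply res_mul_le.
  - destruct (exists_maximal_above E) as [m [Hm Hle]].
    destruct (le_at_nle_res (H m Hm) Hle).
Qed.

Lemma meet_principal_of_local x :
  (forall m, maximal m -> locally_principal_at m x) -> meet_principal L x.
Proof.
  intros H y z. apply le_antisym; [| apply meet_principal_ge].
  apply le_of_le_at. intros m Hm.
  destruct (H m Hm) as [p [[Hp _] [Hpx [r Hrm Hrx]]]].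
  exists (r · r); [apply maximal_prime; auto |].
  set (M := (y ÷ p) ⊓ z).
  assert (Hw : r · (y ⊓ z · x) ≤ M · p).
  { unfold M. rewrite <- Hp. apply meet_ge.
    - apply le_trans with (y ⊓ z · x); [apply mul_le_r | apply le_meet_l].
    - apply le_trans with (r · (z · x)); [apply mul_mono_r, le_meet_r |].
      rewrite mulCA. apply mul_mono_r; auto. }
  assert (HM : r · M ≤ (y ÷ x) ⊓ z).
  { apply meet_ge.
    - apply le_res. rewrite <- mulA, (mulCA r M x). apply le_trans with (M · p).
      + apply mul_mono_r; auto.
      + apply le_trans with ((y ÷ p) · p); [apply mul_mono_l, le_meet_l | apply res_mul_le].
    - apply le_trans with M; [apply mul_le_r | apply le_meet_r]. }
  rewrite <- mulA. apply le_trans with (r · (M · p)); [apply mul_mono_r; auto |].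
  rewrite mulA. apply mul_mono; auto.
Qed.

Lemma join_principal_of_local x :
  (forall m, maximal m -> locally_principal_at m x) -> join_principal L x.
Proof.
  intros H y z. apply le_antisym; [apply join_principal_le |].
  apply le_of_le_at. intros m Hm.
  destruct (H m Hm) as [p [[_ Hp] [Hpx [r Hrm Hrx]]]].
  exists (r · r); [apply maximal_prime; auto |].
  set (t := (y · x ⊔ z) ÷ x).
  assert (Ht : r · t ≤ y ⊔ (z ÷ p)).
  { rewrite Hp. apply le_res. rewrite <- mulA.
    apply le_trans with (r · (t · x)); [apply mul_mono_r, mul_mono_r; auto |].
    apply le_trans with (r · (y · x ⊔ z)); [apply mul_mono_r, res_mul_le |].
    rewrite mul_joinr. apply join_le.
    - rewrite mulCA. apply le_join_of_le_l, mul_mono_r; auto.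
    - apply le_join_of_le_r, mul_le_r. }
  assert (Hr : r · (y ⊔ (z ÷ p)) ≤ y ⊔ (z ÷ x)).
  { rewrite mul_joinr. apply join_le.
    - apply le_join_of_le_l, mul_le_r.
    - apply le_join_of_le_r, le_res. rewrite (mulC L r), <- mulA.
      apply le_trans with ((z ÷ p) · p); [apply mul_mono_r; auto | apply res_mul_le]. }
  rewrite <- mulA. apply le_trans with (r · (y ⊔ (z ÷ p))); [apply mul_mono_r |]; auto.
Qed.

Lemma principal_of_local x :
  (forall m, maximal m -> locally_principal_at m x) -> principal L x.
Proof.
  intros H. split; [apply meet_principal_of_local | apply join_principal_of_local]; auto.
Qed.

End Compact.

(** * Sharp weak Noetherian lattices are locally principal *)

Section WeakNoetherian.
Hypothesis L_wn : weak_noetherian L.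

Lemma lsup_principal_generators x :
  exists l, (forall p, In p l -> principal L p) /\ x = lsup l.
Proof.
  destruct L_wn as [Hgen Hc]. destruct (Hgen x) as [S [HS Ex]].
  destruct (Hc x S) as [l [Hl Hle]]; [rewrite <- Ex; apply le_refl |].
  exists l. split; [intros; apply HS, Hl; auto |].
  apply le_antisym; [exact Hle |].
  apply lsup_le; intros y Hy. rewrite Ex. apply sup_ub; auto.
Qed.

Lemma le_at_nakayama m x c : maximal m -> le_at m x (c ⊔ m · x) -> le_at m x c.
Proof.
  intros Hm. destruct (lsup_principal_generators x) as [l [Hl ->]].
  apply le_at_lsup_nakayama; auto.
Qed.

Lemma locally_principal_at_nle m x : ~ x ≤ m -> locally_principal_at m x.
Proof.
  intros Hxm. destruct (lsup_principal_generators x) as [l [Hl Ex]].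
  assert (exists p, In p l /\ ~ p ≤ m) as [p [Hp Hpm]].
  { apply NNPP; intros Hn. apply Hxm. rewrite Ex. apply lsup_le.
    intros p Hp. apply NNPP; eauto. }
  exists p. split; [auto | split; [rewrite Ex; apply le_lsup; auto |]].
  exists p; [auto | apply mul_le_l].
Qed.

Lemma sharp_maximal_locally_principal m : sharp L -> maximal m ->
  locally_principal_at m m.
Proof.
  intros Hsh Hm. destruct (lsup_principal_generators m) as [l [Hl Em]].
  destruct (classic (exists p, In p l /\ p ⊔ m · m = m)) as [[p [Hp E]] | Hn].
  - exists p. split; [auto | split; [rewrite Em; apply le_lsup; auto |]].
    apply le_at_nakayama; auto. rewrite E. apply le_at_refl; auto.
  - exists ⊥. split; [apply bot_principal | split; [apply bot_le |]].
    apply le_at_nakayama; auto. apply le_at_of_le; auto.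
    apply le_join_of_le_r. rewrite Em at 1. apply lsup_le. intros p Hp.
    destruct (sharp_maximal_sq_cases Hsh Hm (le_join_r p (m · m))) as [E | E].
    + apply join_le; [rewrite Em; apply le_lsup; auto | apply mul_le_l].
    + exfalso; eauto.
    + rewrite <- E. apply le_join_l.
Qed.

Lemma le_at_bot_of_res_le m x : maximal m -> locally_principal_at m m ->
  x ≤ m -> x ÷ m ≤ x -> le_at m x ⊥.
Proof.
  intros Hm [q [[Hq _] [Hqm [u Hu Hum]]]] Hxm Hres.
  apply le_at_nakayama; auto.
  set (v := x ÷ q).
  assert (Hux : u · x ≤ v · q).
  { unfold v. rewrite <- meet_principal_res by exact Hq. apply meet_ge; [apply mul_le_r |].
    apply le_trans with (u · m); [apply mul_mono_r |]; auto. }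
  assert (Huv : u · v ≤ x).
  { apply le_trans with (x ÷ m); [apply le_res | exact Hres].
    rewrite <- mulA, mulCA.
    apply le_trans with (v · q); [apply mul_mono_r; auto | apply res_mul_le]. }
  exists (u · u); [apply maximal_prime; auto |].
  rewrite <- mulA. apply le_trans with (u · (v · q)); [apply mul_mono_r; auto |].
  rewrite mulA, (mulC L m x). apply le_trans with (x · q); [apply mul_mono_l; auto |].
  apply le_join_of_le_r, mul_mono_r; auto.
Qed.

Lemma sharp_locally_principal m : sharp L -> maximal m ->
  forall x, locally_principal_at m x.
Proof.
  intros Hsh Hm x. pose proof (sharp_maximal_locally_principal Hsh Hm) as Hmm.
  induction x as [x IH] using (noetherian_ind (proj2 L_wn)).
  destruct (classic (x ≤ m)) as [Hxm | Hxm]; [| apply locally_principal_at_nle; auto].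
  destruct (classic (x ÷ m ≤ x)) as [Hres | Hres].
  - exists ⊥. split; [apply bot_principal | split; [apply bot_le |]].
    apply le_at_bot_of_res_le; auto.
  - pose proof (sharp_maximal_mul_res Hsh Hm Hres) as Ex.
    destruct (IH (x ÷ m)) as [p [Hp [Hpr Hrp]]].
    + apply le_res, mul_le_l.
    + intros E. apply Hres. rewrite E. apply le_refl.
    + destruct Hmm as [q [Hq [Hqm Hmq]]].
      exists (q · p). split; [apply mul_principal; auto | split].
      * rewrite Ex at 1. apply mul_mono; auto.
      * rewrite Ex at 1. apply le_at_mul; auto.
Qed.

End WeakNoetherian.
End MultLattice.

Theorem corollary2p7 (L : MultLattice) :
  C_lattice L -> weak_noetherian L ->
  (sharp L <-> forall x : L, principal L x).
Proof.
  intros _ Hwn. split.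
  - intros Hsh x. apply (principal_of_local (proj2 Hwn)).
    intros m Hm. exact (sharp_locally_principal Hwn Hsh Hm x).
  - intros Hall. apply sharp_of_meet_principal. intros x. apply Hall.
Qed.
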